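(* For every rewritable 1qfa $M$ with quantum advice $\Psi=\{|\phi_n\rangle\}_{n\in\mathbb N}$, there exist another rewritable 1qfa $N$ (with the same input alphabet and with state set, accepting set and advice-track alphabet of its own) and quantum advice $\Psi'=\{|\phi'_n\rangle\}_{n\in\mathbb N}$ for $N$ such that (i) $N$ performs a measurement only once, just after scanning the entire input, i.e., its acceptance probability on $x=x_1\cdots x_n$ is $\|P_{acc}U^{(n)}_{x_n}\cdots U^{(1)}_{x_1}|q_0\rangle|\phi'_n\rangle\|^2$ (with $U^{(i)}_\sigma$, $P_{acc}$, $q_0$ those of $N$), and (ii) for every input $x$ this acceptance probability of $N$ with $\Psi'$ equals the acceptance probability $p_{acc}(x,\phi_n)$ of $M$ with $\Psi$.
   Context: Rewritable 1qfa: finite state set $Q$ with $q_0\in Q$ and disjoint $Q_{acc},Q_{rej}\subseteq Q$ ($Q_{non}$ the rest), input alphabet $\Sigma$, finite advice-track alphabet $\Gamma$, and for each $\sigma\in\Sigma$, $i\ge1$ a unitary $V^{(i)}_\sigma$ on $\mathrm{span}\{|q\rangle:q\in Q\}\otimes\mathrm{span}\{|\tau\rangle:\tau\in\Gamma\}$. For $n\ge1$, on $E_n=\mathrm{span}\{|q\rangle|y\rangle:q\in Q,y\in\Gamma^n\}$ let $U^{(i)}_\sigma$ ($1\le i\le n$) act as $V^{(i)}_\sigma$ on the state register and the $i$-th advice symbol (which may be changed) and as identity on other advice symbols; the input track is read-only. $P_{acc},P_{rej},P_{non}$ are projections on the state register; $T^{(i)}_\sigma=P_{non}U^{(i)}_\sigma$.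 Quantum advice: unit vectors $|\phi_n\rangle\in\mathrm{span}\{|y\rangle:y\in\Gamma^n\}$. For $x=x_1\cdots x_n\in\Sigma^n$ ($n\ge1$), the (measure-many) acceptance probability is $p_{acc}(x,\phi_n)=\sum_{i=1}^n\|P_{acc}U^{(i)}_{x_i}T^{(i-1)}_{x_{i-1}}\cdots T^{(1)}_{x_1}|q_0\rangle|\phi_n\rangle\|^2$. *)

From HB Require Import structures.
From mathcomp Require Import all_boot all_order all_algebra.
From mathcomp Require Import complex.
From mathcomp Require Import Rstruct.
Set Implicit Arguments. Unset Strict Implicit. Unset Printing Implicit Defensive.
Import Order.TTheory GRing.Theory Num.Theory.
Local Open Scope ring_scope.
Local Open Scope complex_scope.

Definition C : Type := (Rdefinitions.R)[i].

(* vectors of a finite-dimensional Hilbert space with orthonormal basis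
   indexed by the finite type T *)
Definition vec (T : finType) := T -> C.

Definition norm2 (T : finType) (v : vec T) : C := \sum_(t : T) `|v t| ^+ 2.

(* an operator on span{|t> : t in T}, given by its matrix entries
   A t' t = <t'|A|t>; unitary: A^dagger A = I and A A^dagger = I *)
Definition unitary (T : finType) (A : T -> T -> C) : Prop :=
  (forall a b : T, \sum_(c : T) (A c a)^* * A c b = (a == b)%:R) /\
  (forall a b : T, \sum_(c : T) A a c * (A b c)^* = (a == b)%:R).

(* A rewritable 1qfa over input alphabet Sigma.
   V s i (q',g') (q,g) = <q',g'| V^{(i)}_s |q,g>  (only i >= 1 is used). *)
Record rqfa (Sigma : finType) := Rqfa {
  st : finType;
  adv : finType;
  q0 : st;
  Qacc : {set st};
  Qrej : {set st};
  Qdisj : [disjoint Qacc & Qrej];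
  V : Sigma -> nat -> st * adv -> st * adv -> C;
  V_unitary : forall (s : Sigma) (i : nat), unitary (V s i)
}.

Section Machine.
Variables (Sigma : finType) (M : rqfa Sigma).

Definition track (n : nat) := {ffun 'I_n -> adv M}.

Definition Estate (n : nat) := vec (st M * track n)%type.

Definition advice_vec (n : nat) := vec (track n).

(* U^{(j+1)}_s on E_n, for j : 'I_n (0-based position j = 1-based position j+1):
   acts as V^{(j+1)}_s on the state register and the (j+1)-th advice symbol *)
Definition Uop (n : nat) (j : 'I_n) (s : Sigma) (psi : Estate n) : Estate n :=
  fun qy => let: (q', y') := qy in
    \sum_(qg : st M * adv M)
      @V Sigma M s j.+1 (q', y' j) qg * psi (qg.1, finfun (fun k => if k == j then qg.2 else y' k)).

Definition Proj (n : nat) (S : {set st M}) (psi : Estate n) : Estate n :=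
  fun qy => if qy.1 \in S then psi qy else 0.

Definition Qnon : {set st M} := ~: (Qacc M :|: Qrej M).

Definition init (n : nat) (phi : advice_vec n) : Estate n :=
  fun qy => (qy.1 == q0 M)%:R * phi qy.2.

Fixpoint runT (n : nat) (x : n.-tuple Sigma) (phi : advice_vec n) (k : nat)
  : Estate n :=
  match k with
  | 0 => init phi
  | k'.+1 => match insub k' : option 'I_n with
             | Some j => Proj Qnon (Uop j (tnth x j) (runT x phi k'))
             | None => runT x phi k'
             end
  end.

Fixpoint runU (n : nat) (x : n.-tuple Sigma) (phi : advice_vec n) (k : nat)
  : Estate n :=
  match k with
  | 0 => init phi
  | k'.+1 => match insub k' : option 'I_n with
             | Some j => Uop j (tnth x j) (runU x phi k')
             | None => runU x phi k'
             end
  end.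

Definition pacc_mm (n : nat) (x : n.-tuple Sigma) (phi : advice_vec n) : C :=
  \sum_(j < n) norm2 (Proj (Qacc M) (Uop j (tnth x j) (runT x phi j))).

Definition pacc_mo (n : nat) (x : n.-tuple Sigma) (phi : advice_vec n) : C :=
  norm2 (Proj (Qacc M) (runU x phi n)).

Definition quantum_advice (Psi : forall n : nat, advice_vec n) : Prop :=
  forall n : nat, (0 < n)%N -> norm2 (Psi n) = 1.

End Machine.

(* The measure-once machine [N] carries a flag [d] next to the state of [M],
   and every advice cell of [M] gets an extra mark bit.  As long as the flag
   is down, [N] runs [M]; when [M] enters a halting state at step [j], [N]
   raises the flag and the mark of the j-th advice cell, and from then on it
   acts as the identity.  With the advice [|phi_n>] padded by unmarked cells,
   the part of the final state with raised flag is the orthogonal sum over [j]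
   of the branches of [M] halting at step [j], each tagged by the unique mark
   at cell [j].  Measuring "flag raised and accepting state" once at the end
   therefore yields the sum over [j] of the probabilities that [M] accepts at
   step [j]. *)
From HB Require Import structures.
From mathcomp Require Import all_boot all_order all_algebra complex Rstruct.
Set Implicit Arguments. Unset Strict Implicit. Unset Printing Implicit Defensive.
Import Order.TTheory GRing.Theory Num.Theory.
Local Open Scope ring_scope.
Local Open Scope complex_scope.

Lemma big_pair_nested (R : nmodType) (T B : finType) (G : T * B -> R) :
  \sum_c G c = \sum_t \sum_b G (t, b).
Proof. by rewrite pair_bigA; apply: eq_bigr => -[]. Qed.

Lemma unitary_reindex (S T : finType) (A : T -> T -> C) (f g : S -> T) :
  bijective f -> bijective g -> unitary A -> unitary (fun a b => A (f a) (g b)).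
Proof.
move=> bf bg [UA AU]; split=> a b.
- rewrite -(inj_eq (bij_inj bg)) -(UA (g a) (g b)).
  by rewrite (reindex f) //=; apply: onW_bij.
- rewrite -(inj_eq (bij_inj bf)) -(AU (f a) (f b)).
  by rewrite (reindex g) //=; apply: onW_bij.
Qed.

Lemma unitary_delta (T : finType) : unitary (fun a b : T => (a == b)%:R : C).
Proof.
split=> a b; rewrite (bigD1 a) //= big1 ?addr0 => [|c /negbTE]; last first.
- by rewrite eq_sym => ->; rewrite mul0r.
- by rewrite eqxx mul1r eq_sym conjC_nat.
- by move=> ->; rewrite conjC0 mul0r.
by rewrite eqxx conjC1 mul1r.
Qed.

Definition block_diag (T B : finType) (A : B -> T -> T -> C) (x y : T * B) : C :=
  (x.2 == y.2)%:R * A y.2 x.1 y.1.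

Lemma unitary_block_diag (T B : finType) (A : B -> T -> T -> C) :
  (forall b, unitary (A b)) -> unitary (block_diag A).
Proof.
rewrite /block_diag => UA; split=> -[a a2] [b b2] /=.
- rewrite big_pair_nested exchange_big /= (bigD1 a2) //= [X in _ + X]big1 ?addr0;
    last by move=> c /negbTE nc; apply: big1 => t _; rewrite nc mul0r conjC0 mul0r.
  rewrite xpair_eqE; have [<-|ne] := eqVneq a2 b2.
    by under eq_bigr do rewrite eqxx mulr1n !mul1r; rewrite (proj1 (UA a2)) andbT.
  by rewrite andbF; apply: big1 => t _; rewrite mul0r mulr0.
- rewrite big_pair_nested exchange_big /= (bigD1 a2) //= [X in _ + X]big1 ?addr0;
    last by move=> c nc; apply: big1 => t _; rewrite eq_sym (negbTE nc) !mul0r.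
  rewrite xpair_eqE; have [_|ne] := eqVneq a2 b2.
    by under eq_bigr do rewrite eqxx mulr1n !mul1r; rewrite (proj2 (UA a2)) andbT.
  by rewrite andbF; apply: big1 => t _; rewrite mul0r conjC0 mulr0.
Qed.

Lemma sum_block_diag_mul (T B : finType) (A : B -> T -> T -> C) (x : T * B)
    (f : T * B -> C) :
  \sum_y block_diag A x y * f y = \sum_t A x.2 x.1 t * f (t, x.2).
Proof.
rewrite big_pair_nested exchange_big /= (bigD1 x.2) //= [X in _ + X]big1 ?addr0.
  by apply: eq_bigr => t _; rewrite /block_diag eqxx mul1r.
by move=> b /negbTE nb; apply: big1 => t _; rewrite /block_diag /= eq_sym nb !mul0r.
Qed.

Lemma sqr_norm_boolM (R : numDomainType) (b : bool) (z : R) :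
  `|b%:R * z| ^+ 2 = b%:R * `|z| ^+ 2.
Proof. by case: b; rewrite ?mul1r ?mul0r ?normr0 ?expr0n. Qed.

Lemma sqr_norm_sum_excl (R : numDomainType) (I : finType) (P c : pred I) (X : I -> R) :
  (forall i j, c i -> c j -> i = j) ->
  `|\sum_(i | P i) (c i)%:R * X i| ^+ 2 = \sum_(i | P i) (c i)%:R * `|X i| ^+ 2.
Proof.
move=> c_excl; have [i /andP[Pi ci]|none] := pickP (fun i => P i && c i); last first.
  by rewrite !big1 ?normr0 ?expr0n // => i Pi; move: (none i); rewrite Pi /= => ->; rewrite mul0r.
have only_i j : j != i -> c j = false.
  by apply: contraNF => cj; apply/eqP/c_excl.
rewrite (bigD1 i) //= [in RHS](bigD1 i) //= !big1 ?addr0 ?ci ?sqr_norm_boolM //.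
all: by move=> j /andP[_ /only_i ->]; rewrite mul0r.
Qed.

Section FinFunPairs.
Variables (I : finType) (A B : Type).

Definition ffun_upd (T : Type) (y : {ffun I -> T}) (j : I) (c : T) : {ffun I -> T} :=
  [ffun k => if k == j then c else y k].

Lemma ffun_upd_id (T : Type) (y : {ffun I -> T}) j : ffun_upd y j (y j) = y.
Proof. by apply/ffunP => k; rewrite !ffunE; case: eqP => [->|]. Qed.

Definition ffun_fst (y : {ffun I -> A * B}) : {ffun I -> A} := [ffun k => (y k).1].
Definition ffun_snd (y : {ffun I -> A * B}) : {ffun I -> B} := [ffun k => (y k).2].

Lemma ffun_fst_upd y j a b : ffun_fst (ffun_upd y j (a, b)) = ffun_upd (ffun_fst y) j a.
Proof. by apply/ffunP => k; rewrite !ffunE; case: (k == j). Qed.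

Lemma ffun_snd_upd y j a b : ffun_snd (ffun_upd y j (a, b)) = ffun_upd (ffun_snd y) j b.
Proof. by apply/ffunP => k; rewrite !ffunE; case: (k == j). Qed.

End FinFunPairs.

Lemma big_ffun_snd_eq (R : nmodType) (I A B : finType) (m : {ffun I -> B})
    (F : {ffun I -> A} -> R) :
  \sum_(y : {ffun I -> A * B} | ffun_snd y == m) F (ffun_fst y) = \sum_y F y.
Proof.
pose pair_with_m (y : {ffun I -> A}) := [ffun k => (y k, m k)].
have fst_pair y : ffun_fst (pair_with_m y) = y by apply/ffunP => k; rewrite !ffunE.
rewrite (reindex_onto pair_with_m (@ffun_fst I A B)) /=; last first.
  by move=> y /eqP my; apply/ffunP => k; rewrite /pair_with_m -my !ffunE; case: (y k).
apply: eq_big => [y|y _]; rewrite fst_pair // eqxx andbT.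
by apply/eqP/ffunP => k; rewrite !ffunE.
Qed.

Section Marks.
Variable I : finType.

Definition unit_mark (j : I) : {ffun I -> bool} := [ffun k => k == j].
Definition no_mark : {ffun I -> bool} := [ffun => false].

Lemma unit_mark_inj : injective unit_mark.
Proof. by move=> i j /ffunP /(_ i); rewrite !ffunE eqxx => /esym/eqP. Qed.

Lemma eq_unit_markF (mk : {ffun I -> bool}) i j :
  mk j != (j == i) -> (mk == unit_mark i) = false.
Proof. by move=> mkj; apply/negbTE; apply: contra mkj => /eqP->; rewrite ffunE. Qed.

Lemma upd_true_no_markF (mk : {ffun I -> bool}) j : (ffun_upd mk j true == no_mark) = false.
Proof. by apply/negbTE/eqP => /ffunP /(_ j); rewrite !ffunE eqxx. Qed.

Lemma upd_false_no_mark (mk : {ffun I -> bool}) j :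
  mk j -> (ffun_upd mk j false == no_mark) = (mk == unit_mark j).
Proof.
move=> mkj; apply/eqP/eqP => [/ffunP eq_mk|->]; apply/ffunP => k.
  by have := eq_mk k; rewrite !ffunE; case: eqP => [->|_ ->]; rewrite ?mkj.
by rewrite !ffunE; case: eqP.
Qed.

End Marks.

Arguments no_mark {I}.

Section Construction.
Variables (Sigma : finType) (M : rqfa Sigma).

Definition halting : {set st M} := Qacc M :|: Qrej M.

Lemma in_Qnon q : (q \in Qnon M) = (q \notin halting).
Proof. by rewrite inE. Qed.

(* A state [(q, d)] of [N] carries the flag [d]; a cell [(g, m)] the mark [m]. *)
Definition stN := (st M * bool)%type.
Definition advN := (adv M * bool)%type.

(* Testing [d == m] rather than [~~ d && ~~ m] makes this an involution. *)
Definition freeze (a : stN * advN) : stN * advN :=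
  let: ((q, d), (g, m)) := a in
  if (q \in halting) && (d == m) then ((q, ~~ d), (g, ~~ m))
  else ((q, d), (g, m)).

Lemma freezeK : involutive freeze.
Proof.
move=> [[q d] [g m]] /=; case: ifP => /= [/andP[-> /eqP->]|-> //].
by rewrite eqxx /= !negbK.
Qed.

Arguments freeze : simpl never.

Definition regroup (a : stN * advN) : (st M * adv M) * (bool * bool) :=
  let: ((q, d), (g, m)) := a in ((q, g), (d, m)).

Definition ungroup (b : (st M * adv M) * (bool * bool)) : stN * advN :=
  let: ((q, g), (d, m)) := b in ((q, d), (g, m)).

Lemma regroupK : cancel regroup ungroup. Proof. by move=> [[? ?] [? ?]]. Qed.
Lemma ungroupK : cancel ungroup regroup. Proof. by move=> [[? ?] [? ?]]. Qed.

Lemma regroup_bij : bijective regroup.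
Proof. exact: Bijective regroupK ungroupK. Qed.

Definition ctrlV (s : Sigma) (i : nat) (b : bool * bool) : st M * adv M -> st M * adv M -> C :=
  if b.1 then fun x y => (x == y)%:R else V s i.

(* [VN s i] applies [V s i] unless the flag is raised, then [freeze]s. *)
Definition VN (s : Sigma) (i : nat) (a' a : stN * advN) : C :=
  block_diag (ctrlV s i) (regroup (freeze a')) (regroup a).

Lemma VN_unitary s i : unitary (VN s i).
Proof.
apply: (unitary_reindex (A := block_diag (ctrlV s i))).
- exact/bij_comp/(inv_bij freezeK)/regroup_bij.
- exact: regroup_bij.
apply: unitary_block_diag => b; rewrite /ctrlV.
by case: b.1; [exact: unitary_delta | exact: V_unitary].
Qed.

Definition QaccN : {set stN} := [set a | a.2 && (a.1 \in Qacc M)].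

Lemma QaccN_disjoint : [disjoint QaccN & (set0 : {set stN})].
Proof. by rewrite disjoints_subset setC0 subsetT. Qed.

Definition N : rqfa Sigma :=
  @Rqfa Sigma stN advN (q0 M, false) QaccN set0 QaccN_disjoint VN VN_unitary.

End Construction.

Section Runs.
Variables (Sigma : finType) (M : rqfa Sigma) (n : nat).

Lemma runU_succ (x : n.-tuple Sigma) (phi : advice_vec M n) (j : 'I_n) :
  runU x phi j.+1 = Uop j (tnth x j) (runU x phi j).
Proof. by rewrite /= valK. Qed.

Lemma runT_succ (x : n.-tuple Sigma) (phi : advice_vec M n) (j : 'I_n) :
  runT x phi j.+1 = Proj (Qnon M) (Uop j (tnth x j) (runT x phi j)).
Proof. by rewrite /= valK. Qed.

Lemma big_ord_ltS (R : nmodType) (j : 'I_n) (F : 'I_n -> R) :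
  \sum_(i < n | (i < j.+1)%N) F i = F j + \sum_(i < n | (i < j)%N) F i.
Proof.
rewrite (bigD1 j) //=; congr (_ + _); apply: eq_bigl => i.
by rewrite ltnS [(i < j)%N]ltn_neqAle andbC.
Qed.

Lemma eq_Uop (j : 'I_n) s (psi psi' : Estate M n) :
  psi =1 psi' -> Uop j s psi =1 Uop j s psi'.
Proof. by move=> eq_psi [q y]; apply: eq_bigr => qg _; rewrite eq_psi. Qed.

End Runs.

Section Simulation.
Variables (Sigma : finType) (M : rqfa Sigma).
Local Notation N := (N M).

Lemma Uop_N n (psi : Estate N n) (j : 'I_n) s (c : stN M) (y : track N n) :
  Uop j s psi (c, y) =
  let: ((q, d), (g, m)) := freeze (c, y j) in
  if d then psi ((q, true), ffun_upd y j (g, m))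
  else \sum_(qg : st M * adv M)
         V s j.+1 (q, g) qg * psi ((qg.1, false), ffun_upd y j (qg.2, m)).
Proof.
rewrite /Uop; change (@V Sigma N s j.+1) with (@VN _ M s j.+1).
rewrite /VN (reindex (@ungroup _ M)); last first.
  by exists (@regroup _ M) => b _; rewrite (ungroupK, regroupK).
under eq_bigr do rewrite ungroupK.
rewrite sum_block_diag_mul; case: (freeze (c, y j)) => -[q d] [g m] /=.
rewrite /ctrlV /=; case: d; last by apply: eq_bigr => -[].
rewrite (bigD1 (q, g)) //= big1 ?addr0 => [|t /negbTE nt]; last by rewrite eq_sym nt mul0r.
by rewrite eqxx mul1r.
Qed.

Variables (n : nat) (x : n.-tuple Sigma) (phi : advice_vec M n).

Definition adviceN : advice_vec N n :=
  fun y => (ffun_snd y == no_mark)%:R * phi (ffun_fst y).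

Definition halt_branch (j : 'I_n) : Estate M n := Uop j (tnth x j) (runT x phi j).

Definition sim_state (k : nat) : Estate N n := fun a =>
  let: ((q, d), y) := a in
  if d then \sum_(j < n | (j < k)%N)
              (ffun_snd y == unit_mark j)%:R *
              ((q \in halting M)%:R * halt_branch j (q, ffun_fst y))
  else (ffun_snd y == no_mark)%:R * runT x phi k (q, ffun_fst y).

Lemma sim_state_live_step (j : 'I_n) q y :
  Uop j (tnth x j) (sim_state j) ((q, false), y) = sim_state j.+1 ((q, false), y).
Proof.
rewrite Uop_N /sim_state runT_succ /Proj in_Qnon.
case E: (y j) => [g m]; rewrite /freeze /=.
have snd_yj : ffun_snd y j = m by rewrite ffunE E.
have fst_yj : ffun_fst y j = g by rewrite ffunE E.
case halt_q: (q \in halting M) => /=; last first.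
  rewrite fst_yj mulr_sumr; apply: eq_bigr => qg _.
  by rewrite ffun_snd_upd ffun_fst_upd -snd_yj ffun_upd_id mulrCA.
rewrite mulr0; case: m E snd_yj => E snd_yj /=.
  by apply: big1 => qg _; rewrite ffun_snd_upd upd_true_no_markF mul0r mulr0.
apply: big1 => i /= lt_ij; rewrite ffun_snd_upd (@eq_unit_markF _ _ _ j) ?mul0r //.
by rewrite !ffunE eqxx -val_eqE /= gtn_eqF.
Qed.

Lemma sim_state_halted_step (j : 'I_n) q y :
  Uop j (tnth x j) (sim_state j) ((q, true), y) = sim_state j.+1 ((q, true), y).
Proof.
rewrite Uop_N /sim_state big_ord_ltS.
case E: (y j) => [g m]; rewrite /freeze /=.
have snd_yj : ffun_snd y j = m by rewrite ffunE E.
have fst_yj : ffun_fst y j = g by rewrite ffunE E.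
case halt_q: (q \in halting M); case: m E snd_yj => E snd_yj /=.
- rewrite [X in _ + X]big1 ?addr0 => [|i lt_ij]; last first.
    by rewrite (@eq_unit_markF _ _ _ j) ?mul0r // snd_yj -val_eqE /= gtn_eqF.
  rewrite fst_yj mul1r mulr_sumr; apply: eq_bigr => qg _.
  by rewrite ffun_snd_upd upd_false_no_mark // ffun_fst_upd mulrCA.
- rewrite -E ffun_upd_id halt_q (@eq_unit_markF _ _ _ j) ?snd_yj ?eqxx //.
  by rewrite mul0r add0r.
all: by rewrite -E ffun_upd_id halt_q mul0r mulr0 add0r.
Qed.

Lemma sim_state_step (j : 'I_n) :
  Uop j (tnth x j) (sim_state j) =1 sim_state j.+1.
Proof.
by move=> [[q []] y]; [exact: sim_state_halted_step | exact: sim_state_live_step].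
Qed.

Lemma runU_adviceN k : (k <= n)%N -> runU x adviceN k =1 sim_state k.
Proof.
elim: k => [_ [[q []] y] | k IH lt_kn].
- by rewrite /= /init /= xpair_eqE andbF mul0r big_pred0.
- by rewrite /= /init /= xpair_eqE andbT mulrCA.
rewrite (runU_succ _ _ (Ordinal lt_kn)) => a.
by rewrite (eq_Uop _ _ (IH (ltnW lt_kn))) sim_state_step.
Qed.

Lemma norm2_adviceN : norm2 adviceN = norm2 phi.
Proof.
rewrite /norm2 /adviceN; under eq_bigr do rewrite sqr_norm_boolM mulr_natl mulrb.
by rewrite -big_mkcond (big_ffun_snd_eq _ (fun y => `|phi y| ^+ 2)).
Qed.

Lemma pacc_mo_adviceN : pacc_mo x adviceN = pacc_mm x phi.
Proof.
rewrite /pacc_mo /pacc_mm /norm2 /Proj !big_pair_nested.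
under [RHS]eq_bigr do rewrite big_pair_nested.
rewrite [RHS]exchange_big; apply: eq_bigr => q _ /=.
rewrite big_bool /= [X in _ + X]big1 ?addr0 => [|y _]; last by rewrite inE normr0 expr0n.
have [qacc|qNacc] := boolP (q \in Qacc M); last first.
  rewrite big1 => [|y _]; last by rewrite inE /= (negbTE qNacc) normr0 expr0n.
  by rewrite big1 // => j _; rewrite big1 // => y _; rewrite normr0 expr0n.
have marks_excl (y : track N n) i j :
  ffun_snd y == unit_mark i -> ffun_snd y == unit_mark j -> i = j.
  by move=> /eqP-> /eqP/unit_mark_inj.
have q_halting : q \in halting M by rewrite inE qacc.
under eq_bigr => y _.
  rewrite inE /= qacc (runU_adviceN (leqnn n)) /= q_halting.
  rewrite (sqr_norm_sum_excl _ _ (marks_excl y)).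
  over.
rewrite exchange_big /=; apply: eq_big => [j|j _]; first by rewrite ltn_ord.
under eq_bigr do rewrite mul1r mulr_natl mulrb.
by rewrite -big_mkcond (big_ffun_snd_eq _ (fun y => `|halt_branch j (q, y)| ^+ 2)).
Qed.

End Simulation.

Theorem lemma5p7 (Sigma : finType) (M : rqfa Sigma)
  (Psi : forall n : nat, advice_vec M n) :
  quantum_advice Psi ->
  exists (N : rqfa Sigma) (Psi' : forall n : nat, advice_vec N n),
    quantum_advice Psi' /\
    forall (n : nat) (x : n.-tuple Sigma), (0 < n)%N ->
      pacc_mo x (Psi' n) = pacc_mm x (Psi n).
Proof.
move=> unit_Psi; exists (N M), (fun n => adviceN (Psi n)); split.
  by move=> n n_gt0; rewrite norm2_adviceN unit_Psi.
by move=> n x _; apply: pacc_mo_adviceN.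
Qed.
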